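(* Consider the second-order Kuramoto model with bonding force $$\dot\theta_i=\omega_i,\qquad \dot\omega_i=\frac{1}{N}\sum_{j=1}^N\big[\kappa_0\cos(\theta_j-\theta_i)+\kappa_1\big](\omega_j-\omega_i)+\frac{\kappa_2}{N}\sum_{j=1}^N\big[|\theta_j-\theta_i|-\theta^\infty_{ij}\big]\operatorname{sgn}(\theta_j-\theta_i),\quad i\in[N].$$ Suppose $(\Theta^0,W^0)\in\mathcal{S}$, $\mathcal{E}(0)<\frac{\kappa_2(\min_{i\ne j}\theta^\infty_{ij})^2}{2N}$, $\kappa_0\cos\mathcal{U}+\kappa_1>0$, $\kappa_2>0$, and let $\{\theta_i\}$ be a global smooth solution. Then for $i\ne j$, $$\sup_{t\ge0}\Big|\frac{d}{dt}|\omega_j(t)-\omega_i(t)|^2\Big|<\infty,$$ and consequently the map $t\mapsto\sum_{i,j=1}^N|\omega_j(t)-\omega_i(t)|^2$ is uniformly continuous on $[0,\infty)$.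
   Context: $N\ge2$, $\kappa_0,\kappa_1\ge0$; $[\theta^\infty_{ij}]$ real symmetric with zero diagonal; $\operatorname{sgn}$ the sign function. $\mathcal{E}:=\frac12\sum_i|\omega_i|^2+\frac{\kappa_2}{4N}\sum_{i,j}(|\theta_j-\theta_i|-\theta^\infty_{ij})^2$; $\mathcal{U}:=\max_{i\ne j}\theta^\infty_{ij}+\sqrt{2N\mathcal{E}(0)/\kappa_2}$; $\mathcal{S}:=\{(\Theta,W)\in\mathbb{R}^{2N}:|\theta_i-\theta_j|<\mathcal{U}<\pi\ \forall i,j\}$. *)

From Stdlib Require Import Reals Lra.
From Coquelicot Require Import Coquelicot.
Open Scope R_scope.

Fixpoint sumN (n : nat) (f : nat -> R) : R :=
  match n with
  | O => 0
  | S k => sumN k f + f k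
  end.

Definition sgn (x : R) : R :=
  if Rlt_dec 0 x then 1 else if Rlt_dec x 0 then -1 else 0.

Fixpoint fold_row (op : R -> R -> R) (i : nat) (m : nat) (a : nat -> nat -> R)
  (acc : R) : R :=
  match m with
  | O => acc
  | S k => let acc' := fold_row op i k a acc in
           if Nat.eq_dec i k then acc' else op acc' (a i k)
  end.

Fixpoint fold_pairs (op : R -> R -> R) (n N : nat) (a : nat -> nat -> R)
  (acc : R) : R :=
  match n with
  | O => acc
  | S k => fold_row op k N a (fold_pairs op k N a acc)
  end.

(* max_{i <> j} a i j and min_{i <> j} a i j, for N >= 2 (initial value a 0 1
   is itself an off-diagonal entry) *)
Definition offdiag_max (N : nat) (a : nat -> nat -> R) : R :=
  fold_pairs Rmax N N a (a 0%nat 1%nat).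
Definition offdiag_min (N : nat) (a : nat -> nat -> R) : R :=
  fold_pairs Rmin N N a (a 0%nat 1%nat).

Definition energy (N : nat) (k2 : R) (thinf : nat -> nat -> R)
  (theta omega : nat -> R -> R) (t : R) : R :=
  / 2 * sumN N (fun i => (omega i t) ^ 2)
  + k2 / (4 * INR N) *
    sumN N (fun i => sumN N (fun j =>
       (Rabs (theta j t - theta i t) - thinf i j) ^ 2)).

Definition Ubound (N : nat) (k2 : R) (thinf : nat -> nat -> R)
  (theta omega : nat -> R -> R) : R :=
  offdiag_max N thinf + sqrt (2 * INR N * energy N k2 thinf theta omega 0 / k2).

Definition kuramoto_rhs (N : nat) (k0 k1 k2 : R) (thinf : nat -> nat -> R)
  (theta omega : nat -> R -> R) (i : nat) (t : R) : R :=
  / INR N * sumN N (fun j =>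
     (k0 * cos (theta j t - theta i t) + k1) * (omega j t - omega i t))
  + k2 / INR N * sumN N (fun j =>
     (Rabs (theta j t - theta i t) - thinf i j) * sgn (theta j t - theta i t)).

(* The energy [E] is nonincreasing as long as no two phases
   collide and all phase gaps stay below [U < PI]: there, after symmetrising
   the double sums, dE/dt = -(1/2N) sum_{i,j} (k0 cos(theta_j - theta_i) + k1)
   (omega_j - omega_i)^2 <= 0.  Conversely, E(t) <= E(0) bounds every bond
   deviation | |theta_j - theta_i| - thinf_ij | by sqrt(2 N E(0) / k2), which
   is smaller than min thinf; this excludes collisions and keeps the gaps
   below U.  A continuity argument therefore gives E(t) <= E(0) for all
   t >= 0, hence uniform bounds on the velocities and on the right-hand
   sides, so each d/dt (omega_j - omega_i)^2 is bounded and the total sum is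
   Lipschitz on [0, +oo). *)

From Stdlib Require Import Reals Lra Lia.
From Coquelicot Require Import Coquelicot.
Open Scope R_scope.

Lemma sumN_ext n f g :
  (forall k, (k < n)%nat -> f k = g k) -> sumN n f = sumN n g.
Proof.
  induction n as [|n IH]; intros H; simpl; [reflexivity|].
  rewrite IH by (intros; apply H; lia). rewrite H by lia. reflexivity.
Qed.

Lemma sumN_plus n f g : sumN n (fun k => f k + g k) = sumN n f + sumN n g.
Proof. induction n as [|n IH]; simpl; [ring|]. rewrite IH; ring. Qed.

Lemma sumN_scal n c f : sumN n (fun k => c * f k) = c * sumN n f.
Proof. induction n as [|n IH]; simpl; [ring|]. rewrite IH; ring. Qed.

Lemma sumN_const n c : sumN n (fun _ => c) = INR n * c.
Proof. induction n as [|n IH]; simpl sumN; [simpl; ring|]. rewrite IH, S_INR; ring. Qed.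

Lemma sumN_swap n m (F : nat -> nat -> R) :
  sumN n (fun i => sumN m (fun j => F i j)) = sumN m (fun j => sumN n (fun i => F i j)).
Proof.
  induction n as [|n IH]; simpl.
  - rewrite sumN_const; ring.
  - rewrite IH, <- sumN_plus; reflexivity.
Qed.

Lemma sumN_le n f g :
  (forall k, (k < n)%nat -> f k <= g k) -> sumN n f <= sumN n g.
Proof.
  induction n as [|n IH]; intros H; simpl; [lra|].
  apply Rplus_le_compat; [apply IH; intros|]; apply H; lia.
Qed.

Lemma sumN_nonneg n f : (forall k, (k < n)%nat -> 0 <= f k) -> 0 <= sumN n f.
Proof.
  intros H. replace 0 with (sumN n (fun _ => 0)) by (rewrite sumN_const; ring).
  now apply sumN_le.
Qed.

Lemma sumN_Rabs_le n f : Rabs (sumN n f) <= sumN n (fun k => Rabs (f k)).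
Proof.
  induction n as [|n IH]; simpl; [rewrite Rabs_R0; lra|].
  eapply Rle_trans; [apply Rabs_triang | lra].
Qed.

Lemma sumN_ge_term n f k :
  (forall k, (k < n)%nat -> 0 <= f k) -> (k < n)%nat -> f k <= sumN n f.
Proof.
  induction n as [|n IH]; intros Hpos Hk; [lia|]. simpl.
  assert (0 <= sumN n f) by (apply sumN_nonneg; intros; apply Hpos; lia).
  assert (0 <= f n) by (apply Hpos; lia).
  destruct (Nat.eq_dec k n) as [->|Hkn]; [lra|].
  assert (f k <= sumN n f) by (apply IH; [intros; apply Hpos|]; lia). lra.
Qed.

Lemma sumN_ge_two_terms n f i j :
  (forall k, (k < n)%nat -> 0 <= f k) -> (i < n)%nat -> (j < n)%nat -> i <> j ->
  f i + f j <= sumN n f.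
Proof.
  induction n as [|n IH]; intros Hpos Hi Hj Hij; [lia|]. simpl.
  assert (Hpos' : forall k, (k < n)%nat -> 0 <= f k) by (intros; apply Hpos; lia).
  destruct (Nat.eq_dec i n) as [->|Hin]; [|destruct (Nat.eq_dec j n) as [->|Hjn]].
  - assert (f j <= sumN n f) by (apply sumN_ge_term; auto; lia). lra.
  - assert (f i <= sumN n f) by (apply sumN_ge_term; auto; lia). lra.
  - assert (f i + f j <= sumN n f) by (apply IH; auto; lia).
    assert (0 <= f n) by (apply Hpos; lia). lra.
Qed.

Definition dsum n (F : nat -> nat -> R) : R := sumN n (fun i => sumN n (fun j => F i j)).

Lemma dsum_ext n F G :
  (forall i j, (i < n)%nat -> (j < n)%nat -> F i j = G i j) -> dsum n F = dsum n G.
Proof. intros H. apply sumN_ext; intros i Hi. apply sumN_ext; intros j Hj. auto. Qed.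

Lemma dsum_plus n F G : dsum n (fun i j => F i j + G i j) = dsum n F + dsum n G.
Proof. unfold dsum. rewrite <- sumN_plus. apply sumN_ext; intros. apply sumN_plus. Qed.

Lemma dsum_scal n c F : dsum n (fun i j => c * F i j) = c * dsum n F.
Proof. unfold dsum. rewrite <- sumN_scal. apply sumN_ext; intros. apply sumN_scal. Qed.

Lemma dsum_swap n F : dsum n F = dsum n (fun i j => F j i).
Proof. apply sumN_swap. Qed.

Lemma dsum_antisym n (w : nat -> R) F :
  (forall i j, (i < n)%nat -> (j < n)%nat -> F j i = - F i j) ->
  dsum n (fun i j => w i * F i j) = - / 2 * dsum n (fun i j => F i j * (w j - w i)).
Proof.
  intros Hanti.
  assert (Hswap : dsum n (fun i j => w i * F i j) = dsum n (fun i j => -1 * (w j * F i j))).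
  { rewrite dsum_swap. apply dsum_ext; intros i j Hi Hj. rewrite Hanti by auto. ring. }
  assert (Hdouble : dsum n (fun i j => w i * F i j) + dsum n (fun i j => -1 * (w j * F i j))
                    = -1 * dsum n (fun i j => F i j * (w j - w i))).
  { rewrite <- dsum_plus, <- dsum_scal. apply dsum_ext; intros. ring. }
  lra.
Qed.

Lemma dsum_Rabs_le n F M :
  (forall i j, (i < n)%nat -> (j < n)%nat -> Rabs (F i j) <= M) ->
  Rabs (dsum n F) <= INR n * (INR n * M).
Proof.
  intros H. eapply Rle_trans; [apply sumN_Rabs_le|].
  rewrite <- sumN_const. apply sumN_le; intros i Hi.
  eapply Rle_trans; [apply sumN_Rabs_le|].
  rewrite <- sumN_const. apply sumN_le; auto.
Qed.

Lemma sgn_sign x : sgn x = sign x.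
Proof.
  unfold sgn. destruct (Rlt_dec 0 x); [now rewrite sign_eq_1|].
  destruct (Rlt_dec x 0); [now rewrite sign_eq_m1|].
  replace x with 0 by lra. now rewrite sign_0.
Qed.

Lemma sgn_opp x : sgn (- x) = - sgn x.
Proof. rewrite !sgn_sign. apply sign_opp. Qed.

Lemma Rabs_sgn_le x : Rabs (sgn x) <= 1.
Proof.
  unfold sgn. destruct (Rlt_dec 0 x); [|destruct (Rlt_dec x 0)];
    [rewrite Rabs_R1 | rewrite Rabs_left | rewrite Rabs_R0]; lra.
Qed.

Lemma is_derive_sumN n (F : nat -> R -> R) dF x :
  (forall k, (k < n)%nat -> is_derive (F k) x (dF k)) ->
  is_derive (fun s => sumN n (fun k => F k s)) x (sumN n dF).
Proof.
  induction n as [|n IH]; intros H; simpl; [apply (is_derive_const 0)|].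
  apply (is_derive_plus (fun s => sumN n (fun k => F k s)) (F n));
    [apply IH; intros|]; apply H; lia.
Qed.

Lemma is_derive_sq (f : R -> R) x l :
  is_derive f x l -> is_derive (fun s => f s ^ 2) x (2 * f x * l).
Proof.
  intros H. replace (2 * f x * l) with (INR 2 * l * f x ^ Init.Nat.pred 2) by (simpl; ring).
  now apply is_derive_pow.
Qed.

Lemma is_derive_Rabs_sgn (f : R -> R) x l :
  is_derive f x l -> f x <> 0 -> is_derive (fun s => Rabs (f s)) x (sgn (f x) * l).
Proof. rewrite sgn_sign. apply is_derive_Rabs. Qed.

Lemma continuous_sumN n (F : nat -> R -> R) x :
  (forall k, (k < n)%nat -> continuous (F k) x) ->
  continuous (fun s => sumN n (fun k => F k s)) x.
Proof.
  induction n as [|n IH]; intros H; simpl; [apply continuous_const|].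
  apply (continuous_plus (fun s => sumN n (fun k => F k s)) (F n));
    [apply IH; intros|]; apply H; lia.
Qed.

Lemma continuous_sq (f : R -> R) x : continuous f x -> continuous (fun s => f s ^ 2) x.
Proof.
  intros H. apply (continuous_ext (fun s => f s * f s)).
  - intros; simpl; ring.
  - now apply (continuous_mult f f).
Qed.

Lemma continuous_locally_pos (f : R -> R) x :
  continuous f x -> 0 < f x -> locally x (fun y => 0 < f y).
Proof. intros Hf Hpos. exact (Hf _ (open_gt 0 _ Hpos)). Qed.

Lemma locally_forall_lt n (P : nat -> R -> Prop) x :
  (forall k, (k < n)%nat -> locally x (P k)) ->
  locally x (fun y => forall k, (k < n)%nat -> P k y).
Proof.
  induction n as [|n IH]; intros H.
  - apply filter_forall. intros; lia.
  - eapply filter_imp; [|apply filter_and; [apply IH; intros; apply H; lia | apply (H n); lia]].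
    intros y [Hlt Hn] k Hk. destruct (Nat.eq_dec k n) as [->|]; auto. apply Hlt; lia.
Qed.

Lemma locally_Rabs x (P : R -> Prop) :
  locally x P -> exists d, 0 < d /\ forall y, Rabs (y - x) < d -> P y.
Proof. intros [e He]. exists e. split; [apply cond_pos | exact He]. Qed.

Lemma le_of_continuous_le_before (g : R -> R) a t c :
  continuous g t -> a < t -> (forall v, a <= v < t -> g v <= c) -> g t <= c.
Proof.
  intros Hg Hat Hbefore. apply Rnot_lt_le; intros Hgt.
  assert (Hloc : locally t (fun y => 0 < g y - c)).
  { apply (continuous_locally_pos (fun y => g y - c)); [|lra].
    apply (continuous_minus g (fun _ => c)); [exact Hg | apply continuous_const]. }
  destruct (locally_Rabs _ _ Hloc) as [d [Hd Hnear]].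
  assert (Hm : 0 < Rmin d (t - a) <= d /\ Rmin d (t - a) <= t - a).
  { split; [split|]; [apply Rmin_pos | apply Rmin_l | apply Rmin_r]; lra. }
  set (v := t - Rmin d (t - a) / 2).
  assert (Hv : 0 < g v - c) by (apply Hnear; unfold v; rewrite Rabs_left; lra).
  assert (g v <= c) by (apply Hbefore; unfold v; lra).
  lra.
Qed.

Lemma continuous_induction_le (g : R -> R) c :
  (forall t, 0 <= t -> continuous g t) -> g 0 <= c ->
  (forall t, 0 <= t -> g t <= c ->
     exists d, 0 < d /\ forall s, t <= s <= t + d -> g s <= c) ->
  forall t, 0 <= t -> g t <= c.
Proof.
  intros Hcont H0 Hstep t1 Ht1. apply Rnot_lt_le; intros Hgt1.
  set (S := fun x => 0 <= x <= t1 /\ forall v, 0 <= v <= x -> g v <= c).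
  assert (HS0 : S 0) by (split; [lra | intros v Hv; replace v with 0 by lra; exact H0]).
  destruct (completeness S) as [t0 [Hub Hlub]].
  { exists t1. intros x [[_ Hx] _]. exact Hx. }
  { exists 0. exact HS0. }
  assert (Ht0 : 0 <= t0) by (apply Hub, HS0).
  assert (Ht0t1 : t0 <= t1) by (apply Hlub; intros x [[_ Hx] _]; exact Hx).
  assert (Hbefore : forall v, 0 <= v < t0 -> g v <= c).
  { intros v Hv. apply Rnot_lt_le; intros Hgv.
    assert (t0 <= v); [|lra].
    apply Hlub. intros x [_ Hx]. apply Rnot_lt_le; intros Hvx.
    assert (g v <= c) by (apply Hx; lra). lra. }
  assert (Hgt0 : g t0 <= c).
  { destruct (Req_dec t0 0) as [->|Hne]; [exact H0|].
    apply (le_of_continuous_le_before g 0); auto; lra. }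
  destruct (Hstep t0 Ht0 Hgt0) as [d [Hd Hafter]].
  assert (Hext : S (Rmin (t0 + d) t1)).
  { split; [split; [apply Rmin_glb | apply Rmin_r]; lra|].
    intros v Hv. destruct (Rlt_dec v t0); [apply Hbefore; lra|].
    apply Hafter. pose proof (Rmin_l (t0 + d) t1). lra. }
  apply Hub in Hext. revert Hext. unfold Rmin. destruct (Rle_dec (t0 + d) t1); intros; [lra|].
  assert (t0 = t1) as <- by lra. lra.
Qed.

Lemma nonincreasing_of_derive_nonpos (g dg : R -> R) a b :
  a <= b -> (forall x, a <= x <= b -> is_derive g x (dg x) /\ dg x <= 0) -> g b <= g a.
Proof.
  intros Hab Hder.
  destruct (MVT_gen g a b dg) as [c [Hc Hmvt]]; rewrite ?Rmin_left, ?Rmax_right in * by lra.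
  - intros x Hx. apply Hder; lra.
  - intros x Hx. apply continuity_pt_filterlim, (ex_derive_continuous g).
    exists (dg x). apply Hder; lra.
  - destruct (Hder c Hc) as [_ Hneg]. assert (0 <= b - a) by lra. nra.
Qed.

Lemma lipschitz_of_bounded_derive (f df : R -> R) M s t :
  (forall x, 0 <= x -> is_derive f x (df x) /\ Rabs (df x) <= M) ->
  0 <= s -> 0 <= t -> Rabs (f s - f t) <= M * Rabs (s - t).
Proof.
  intros Hder. revert s t.
  assert (Hle : forall s t, 0 <= s <= t -> Rabs (f s - f t) <= M * Rabs (s - t)).
  { intros s t Hst. apply (bounded_variation f df). intros x Hx.
    rewrite (Rabs_left1 (s - t)) in Hx by lra.
    apply Hder. apply Rabs_le_between in Hx. lra. }
  intros s t Hs Ht. destruct (Rle_dec s t); [apply Hle; lra|].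
  rewrite Rabs_minus_sym, (Rabs_minus_sym s t). apply Hle; lra.
Qed.

Lemma uniformly_continuous_of_bounded_derive (f df : R -> R) M :
  (forall x, 0 <= x -> is_derive f x (df x) /\ Rabs (df x) <= M) ->
  forall eps, 0 < eps -> exists delta, 0 < delta /\
    forall s t, 0 <= s -> 0 <= t -> Rabs (s - t) < delta -> Rabs (f s - f t) < eps.
Proof.
  intros Hder eps Heps.
  assert (HM : 0 <= M).
  { destruct (Hder 0 (Rle_refl 0)) as [_ H]. pose proof (Rabs_pos (df 0)). lra. }
  exists (eps / (M + 1)). split; [apply Rdiv_lt_0_compat; lra|].
  intros s t Hs Ht Hst.
  assert (Hlip := lipschitz_of_bounded_derive f df M s t Hder Hs Ht).
  assert (M * Rabs (s - t) <= M * (eps / (M + 1))) by (apply Rmult_le_compat_l; lra).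
  assert (M * (eps / (M + 1)) < eps).
  { apply (Rmult_lt_reg_r (M + 1)); [lra|]. field_simplify; lra. }
  lra.
Qed.

Section FoldPairs.

Variables (op : R -> R -> R) (rel : R -> R -> Prop).
Hypothesis rel_refl : forall x, rel x x.
Hypothesis rel_trans : forall x y z, rel x y -> rel y z -> rel x z.
Hypothesis rel_op_l : forall x y, rel x (op x y).
Hypothesis rel_op_r : forall x y, rel y (op x y).

Lemma fold_row_rel i m a acc :
  rel acc (fold_row op i m a acc) /\
  forall k, (k < m)%nat -> k <> i -> rel (a i k) (fold_row op i m a acc).
Proof.
  induction m as [|m [Hacc Hk]]; simpl.
  - split; [apply rel_refl | intros; lia].
  - destruct (Nat.eq_dec i m) as [->|Him].
    + split; [exact Hacc|]. intros k Hk' Hkm. apply Hk; lia.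
    + split; [eapply rel_trans; [exact Hacc | apply rel_op_l]|].
      intros k Hk' Hki. destruct (Nat.eq_dec k m) as [->|]; [apply rel_op_r|].
      eapply rel_trans; [apply Hk; lia | apply rel_op_l].
Qed.

Lemma fold_pairs_rel n N a acc :
  rel acc (fold_pairs op n N a acc) /\
  forall i k, (i < n)%nat -> (k < N)%nat -> i <> k -> rel (a i k) (fold_pairs op n N a acc).
Proof.
  induction n as [|n [Hacc Hik]]; simpl.
  - split; [apply rel_refl | intros; lia].
  - destruct (fold_row_rel n N a (fold_pairs op n N a acc)) as [Hrow_acc Hrow].
    split; [eapply rel_trans; eauto|].
    intros i k Hi Hk Hne. destruct (Nat.eq_dec i n) as [->|]; [now apply Hrow|].
    eapply rel_trans; [apply Hik; auto; lia | exact Hrow_acc].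
Qed.

Hypothesis op_sel : forall x y, op x y = x \/ op x y = y.

Lemma fold_row_mem i m a acc :
  fold_row op i m a acc = acc \/
  exists k, (k < m)%nat /\ k <> i /\ fold_row op i m a acc = a i k.
Proof.
  induction m as [|m IH]; simpl; [now left|].
  destruct (Nat.eq_dec i m) as [->|Him].
  - destruct IH as [|[k [Hk Hrest]]]; [now left | right; exists k; split; [lia | exact Hrest]].
  - destruct (op_sel (fold_row op i m a acc) (a i m)) as [-> | ->].
    + destruct IH as [|[k [Hk Hrest]]]; [now left | right; exists k; split; [lia | exact Hrest]].
    + right. exists m. split; [lia|]. split; [congruence | reflexivity].
Qed.

Lemma fold_pairs_mem n N a acc :
  fold_pairs op n N a acc = acc \/
  exists i k, (i < n)%nat /\ (k < N)%nat /\ i <> k /\ fold_pairs op n N a acc = a i k.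
Proof.
  induction n as [|n IH]; simpl; [now left|].
  destruct (fold_row_mem n N a (fold_pairs op n N a acc)) as [-> | [k [Hk [Hkn ->]]]].
  - destruct IH as [|[i [k [Hi Hrest]]]]; [now left | right; exists i, k; split; [lia | exact Hrest]].
  - right. exists n, k. repeat split; auto.
Qed.

End FoldPairs.

Lemma offdiag_max_ge N a i k :
  (i < N)%nat -> (k < N)%nat -> i <> k -> a i k <= offdiag_max N a.
Proof.
  apply (fold_pairs_rel Rmax Rle); [apply Rle_refl | intros; lra | apply Rmax_l | apply Rmax_r].
Qed.

Lemma offdiag_min_le N a i k :
  (i < N)%nat -> (k < N)%nat -> i <> k -> offdiag_min N a <= a i k.
Proof.
  apply (fold_pairs_rel Rmin (fun x y => y <= x));
    [apply Rle_refl | intros; lra | apply Rmin_l | apply Rmin_r].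
Qed.

Lemma offdiag_min_attained N a :
  (2 <= N)%nat ->
  exists i k, (i < N)%nat /\ (k < N)%nat /\ i <> k /\ offdiag_min N a = a i k.
Proof.
  intros HN.
  assert (Hsel : forall x y, Rmin x y = x \/ Rmin x y = y).
  { intros x y. unfold Rmin. destruct (Rle_dec x y); auto. }
  destruct (fold_pairs_mem Rmin Hsel N N a (a 0%nat 1%nat)) as [Hacc | Hmem].
  - exists 0%nat, 1%nat. repeat split; [lia | lia | lia | exact Hacc].
  - exact Hmem.
Qed.

Lemma Rabs_mean_le n (f : nat -> R) c :
  (0 < n)%nat -> (forall k, (k < n)%nat -> Rabs (f k) <= c) ->
  Rabs (/ INR n * sumN n f) <= c.
Proof.
  intros Hn Hf. assert (Hpos : 0 < INR n) by (apply lt_0_INR; exact Hn).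
  rewrite Rabs_mult, Rabs_inv, (Rabs_pos_eq (INR n)) by lra.
  apply (Rmult_le_reg_l (INR n)); [exact Hpos|].
  rewrite <- Rmult_assoc, Rinv_r, Rmult_1_l by lra. rewrite <- sumN_const.
  eapply Rle_trans; [apply sumN_Rabs_le | now apply sumN_le].
Qed.

Lemma kuramoto_rhs_abs_le N k0 k1 k2 thinf (theta omega : nat -> R -> R) i t B G :
  (0 < N)%nat -> 0 <= k0 -> 0 <= k1 -> 0 <= k2 -> 0 <= G -> (i < N)%nat ->
  (forall j, (j < N)%nat -> Rabs (omega j t) <= B) ->
  (forall j, (j < N)%nat -> j <> i ->
     Rabs (Rabs (theta j t - theta i t) - thinf i j) <= G) ->
  Rabs (kuramoto_rhs N k0 k1 k2 thinf theta omega i t) <= (k0 + k1) * (2 * B) + k2 * G.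
Proof.
  intros HN Hk0 Hk1 Hk2 HG Hi HB Hdev. unfold kuramoto_rhs.
  eapply Rle_trans; [apply Rabs_triang | apply Rplus_le_compat].
  - apply Rabs_mean_le; [exact HN|]. intros j Hj. rewrite Rabs_mult.
    assert (Hc : Rabs (k0 * cos (theta j t - theta i t) + k1) <= k0 + k1).
    { pose proof (COS_bound (theta j t - theta i t)). apply Rabs_le. nra. }
    assert (Hw : Rabs (omega j t - omega i t) <= 2 * B).
    { unfold Rminus. eapply Rle_trans; [apply Rabs_triang|].
      rewrite Rabs_Ropp. pose proof (HB i Hi). pose proof (HB j Hj). lra. }
    apply Rmult_le_compat; auto using Rabs_pos.
  - unfold Rdiv. rewrite Rmult_assoc, Rabs_mult, (Rabs_pos_eq k2) by exact Hk2.
    apply Rmult_le_compat_l; [exact Hk2|].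
    apply Rabs_mean_le; [exact HN|]. intros j Hj. rewrite Rabs_mult.
    destruct (Nat.eq_dec j i) as [->|Hji].
    + rewrite Rminus_diag, sgn_sign, sign_0, Rabs_R0, Rmult_0_r. exact HG.
    + pose proof (Rabs_sgn_le (theta j t - theta i t)). pose proof (Hdev j Hj Hji).
      pose proof (Rabs_pos (sgn (theta j t - theta i t))). nra.
Qed.

Lemma cos_ge_of_abs_le x u : Rabs x <= u -> u <= PI -> cos u <= cos x.
Proof.
  intros Hxu HuPI. pose proof (Rabs_pos x).
  replace (cos x) with (cos (Rabs x)).
  - apply cos_decr_1; lra.
  - destruct (Rle_dec 0 x); [now rewrite Rabs_pos_eq | rewrite Rabs_left, cos_neg by lra; reflexivity].
Qed.

Lemma Rabs_le_sqrt_of_sq_le x y : x ^ 2 <= y -> Rabs x <= sqrt y.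
Proof.
  intros H. rewrite <- sqrt_Rsqr_abs. apply sqrt_le_1_alt. unfold Rsqr. simpl in H. lra.
Qed.

Section BondingKuramoto.

Variables (N : nat) (k0 k1 k2 : R) (thinf : nat -> nat -> R) (theta omega : nat -> R -> R).
Hypothesis HN : (2 <= N)%nat.
Hypothesis Hk0 : 0 <= k0.
Hypothesis Hk1 : 0 <= k1.
Hypothesis Hk2 : 0 < k2.
Hypothesis Hsym : forall i j, (i < N)%nat -> (j < N)%nat -> thinf i j = thinf j i.
Hypothesis Hsol : forall i t, (i < N)%nat -> 0 <= t ->
  is_derive (theta i) t (omega i t) /\
  is_derive (omega i) t (kuramoto_rhs N k0 k1 k2 thinf theta omega i t).

Local Notation E := (energy N k2 thinf theta omega).
Local Notation rhs := (kuramoto_rhs N k0 k1 k2 thinf theta omega).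

Lemma INR_N_pos : 0 < INR N.
Proof. apply lt_0_INR; lia. Qed.

Lemma velocity_sq_le_energy i t : (i < N)%nat -> omega i t ^ 2 <= 2 * E t.
Proof.
  intros Hi. pose proof INR_N_pos. unfold energy.
  assert (omega i t ^ 2 <= sumN N (fun i => omega i t ^ 2))
    by (apply (sumN_ge_term N (fun i => omega i t ^ 2)); auto; intros; apply pow2_ge_0).
  assert (0 <= k2 / (4 * INR N) *
            sumN N (fun i => sumN N (fun j => (Rabs (theta j t - theta i t) - thinf i j) ^ 2))).
  { apply Rmult_le_pos; [apply Rlt_le, Rdiv_lt_0_compat; lra|].
    apply sumN_nonneg; intros; apply sumN_nonneg; intros; apply pow2_ge_0. }
  lra.
Qed.

Lemma bond_deviation_sq_le_energy i j t :
  (i < N)%nat -> (j < N)%nat -> i <> j ->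
  (Rabs (theta j t - theta i t) - thinf i j) ^ 2 <= 2 * INR N * E t / k2.
Proof.
  intros Hi Hj Hij. pose proof INR_N_pos. unfold energy.
  set (T := fun i j => (Rabs (theta j t - theta i t) - thinf i j) ^ 2).
  set (S := sumN N (fun i => omega i t ^ 2)).
  change (sumN N (fun i => sumN N (fun j => _))) with (sumN N (fun i => sumN N (T i))).
  assert (HS : 0 <= INR N * S / k2).
  { apply Rmult_le_pos; [|apply Rlt_le, Rinv_0_lt_compat; lra].
    apply Rmult_le_pos; [lra|]. apply sumN_nonneg; intros; apply pow2_ge_0. }
  assert (HTji : T j i = T i j)
    by (unfold T; rewrite (Hsym j i), Rabs_minus_sym by assumption; reflexivity).
  assert (Htwo : T i j + T j i <= sumN N (fun i => sumN N (T i))).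
  { eapply Rle_trans; [|apply (sumN_ge_two_terms N (fun i => sumN N (T i)) i j); auto;
      intros; apply sumN_nonneg; intros; apply pow2_ge_0].
    apply Rplus_le_compat; apply (sumN_ge_term N (T _)); auto; intros; apply pow2_ge_0. }
  replace (2 * INR N * (/ 2 * S + k2 / (4 * INR N) * sumN N (fun i => sumN N (T i))) / k2)
    with (INR N * S / k2 + sumN N (fun i => sumN N (T i)) / 2) by (field; lra).
  fold (T i j). lra.
Qed.

Definition energy_rate t : R :=
  sumN N (fun i => omega i t * rhs i t)
  + k2 / (2 * INR N) * dsum N (fun i j =>
      (Rabs (theta j t - theta i t) - thinf i j) * sgn (theta j t - theta i t)
      * (omega j t - omega i t)).

Lemma is_derive_energy t :
  0 <= t -> (forall i j, (i < N)%nat -> (j < N)%nat -> i <> j -> theta j t - theta i t <> 0) ->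
  is_derive E t (energy_rate t).
Proof.
  intros Ht Hcoll. unfold energy, energy_rate, dsum.
  replace (k2 / (2 * INR N)) with (k2 / (4 * INR N) * 2) by (pose proof INR_N_pos; field; lra).
  rewrite Rmult_assoc, <- sumN_scal.
  replace (sumN N (fun i => omega i t * rhs i t)) with (/ 2 * sumN N (fun i => 2 * omega i t * rhs i t))
    by (rewrite <- sumN_scal; apply sumN_ext; intros; field).
  apply (is_derive_plus (fun s => / 2 * sumN N (fun i => omega i s ^ 2))
    (fun s => k2 / (4 * INR N) * sumN N (fun i => sumN N (fun j =>
       (Rabs (theta j s - theta i s) - thinf i j) ^ 2)))).
  - apply is_derive_scal, (is_derive_sumN N (fun i s => omega i s ^ 2)).
    intros i Hi. apply (is_derive_sq (omega i)), Hsol; assumption.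
  - apply is_derive_scal.
    replace (sumN N (fun k => 2 * sumN N (fun j => _))) with
      (sumN N (fun i => sumN N (fun j => 2 * ((Rabs (theta j t - theta i t) - thinf i j)
         * sgn (theta j t - theta i t) * (omega j t - omega i t)))))
      by (apply sumN_ext; intros; apply sumN_scal).
    apply (is_derive_sumN N (fun i s => sumN N (fun j => (Rabs (theta j s - theta i s) - thinf i j) ^ 2))).
    intros i Hi. apply (is_derive_sumN N (fun j s => (Rabs (theta j s - theta i s) - thinf i j) ^ 2)).
    intros j Hj. destruct (Nat.eq_dec i j) as [<-|Hij].
    + rewrite Rminus_diag, sgn_sign, sign_0, Rmult_0_r, Rmult_0_l, Rmult_0_r.
      apply (is_derive_ext (fun _ => (Rabs 0 - thinf i i) ^ 2)); [intros; now rewrite Rminus_diag|].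
      apply (is_derive_const ((Rabs 0 - thinf i i) ^ 2)).
    + replace (2 * ((Rabs (theta j t - theta i t) - thinf i j) * sgn (theta j t - theta i t)
                 * (omega j t - omega i t)))
        with (2 * (Rabs (theta j t - theta i t) - thinf i j)
              * (sgn (theta j t - theta i t) * (omega j t - omega i t) - 0)) by ring.
      apply (is_derive_sq (fun s => Rabs (theta j s - theta i s) - thinf i j)).
      apply (is_derive_minus (fun s => Rabs (theta j s - theta i s)) (fun _ => thinf i j));
        [|apply (is_derive_const (thinf i j))].
      apply (is_derive_Rabs_sgn (fun s => theta j s - theta i s)); [|now apply Hcoll].
      apply (is_derive_minus (theta j) (theta i)); apply Hsol; assumption.
Qed.

Lemma energy_rate_eq t :
  energy_rate t = - / (2 * INR N) * dsum N (fun i j =>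
    (k0 * cos (theta j t - theta i t) + k1) * (omega j t - omega i t) ^ 2).
Proof.
  pose proof INR_N_pos as HNpos.
  set (A := fun i j => (k0 * cos (theta j t - theta i t) + k1) * (omega j t - omega i t)).
  set (F := fun i j => (Rabs (theta j t - theta i t) - thinf i j) * sgn (theta j t - theta i t)).
  assert (HA : dsum N (fun i j => omega i t * A i j)
               = - / 2 * dsum N (fun i j => (k0 * cos (theta j t - theta i t) + k1)
                                            * (omega j t - omega i t) ^ 2)).
  { rewrite (dsum_antisym N (fun i => omega i t) A).
    - f_equal. apply dsum_ext; intros. unfold A. ring.
    - intros i j _ _. unfold A. rewrite <- (cos_neg (theta j t - theta i t)).
      rewrite Ropp_minus_distr. ring. }
  assert (HF : dsum N (fun i j => omega i t * F i j)
               = - / 2 * dsum N (fun i j => F i j * (omega j t - omega i t))).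
  { apply dsum_antisym. intros i j Hi Hj. unfold F.
    rewrite <- (Ropp_minus_distr (theta j t)), Rabs_Ropp, sgn_opp, (Hsym j i) by assumption. ring. }
  assert (Hkin : sumN N (fun i => omega i t * rhs i t)
                 = / INR N * dsum N (fun i j => omega i t * A i j)
                   + k2 / INR N * dsum N (fun i j => omega i t * F i j)).
  { unfold dsum. rewrite <- !sumN_scal, <- sumN_plus. apply sumN_ext; intros i Hi.
    unfold kuramoto_rhs, A, F. rewrite !sumN_scal. ring. }
  unfold energy_rate. rewrite Hkin, HA, HF.
  change (dsum N (fun i j => _ * sgn _ * _)) with (dsum N (fun i j => F i j * (omega j t - omega i t))).
  field. lra.
Qed.

Lemma theta_continuous i t : (i < N)%nat -> 0 <= t -> continuous (theta i) t.
Proof.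
  intros Hi Ht. apply (ex_derive_continuous (theta i)).
  exists (omega i t). now apply Hsol.
Qed.

Lemma omega_continuous i t : (i < N)%nat -> 0 <= t -> continuous (omega i) t.
Proof.
  intros Hi Ht. apply (ex_derive_continuous (omega i)).
  exists (rhs i t). now apply Hsol.
Qed.

Lemma energy_continuous t : 0 <= t -> continuous E t.
Proof.
  intros Ht. unfold energy.
  set (K := fun s => sumN N (fun i => omega i s ^ 2)).
  set (P := fun s => sumN N (fun i => sumN N (fun j =>
              (Rabs (theta j s - theta i s) - thinf i j) ^ 2))).
  apply (continuous_plus (fun s => / 2 * K s) (fun s => k2 / (4 * INR N) * P s)).
  - apply (continuous_mult (fun _ => / 2) K); [apply continuous_const|].
    apply (continuous_sumN N (fun i s => omega i s ^ 2)); intros i Hi.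
    apply continuous_sq, omega_continuous; assumption.
  - apply (continuous_mult (fun _ => k2 / (4 * INR N)) P); [apply continuous_const|].
    apply (continuous_sumN N (fun i s => sumN N (fun j => (Rabs (theta j s - theta i s) - thinf i j) ^ 2)));
      intros i Hi.
    apply (continuous_sumN N (fun j s => (Rabs (theta j s - theta i s) - thinf i j) ^ 2)); intros j Hj.
    apply (continuous_sq (fun s => Rabs (theta j s - theta i s) - thinf i j)).
    apply (continuous_minus (fun s => Rabs (theta j s - theta i s)) (fun _ => thinf i j));
      [|apply continuous_const].
    apply (continuous_Rabs_comp (fun s => theta j s - theta i s)).
    apply (continuous_minus (theta j) (theta i)); apply theta_continuous; assumption.
Qed.

Hypothesis HUpi : Ubound N k2 thinf theta omega < PI.
Hypothesis HE0 : E 0 < k2 * offdiag_min N thinf ^ 2 / (2 * INR N).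
Hypothesis Hcoup : k0 * cos (Ubound N k2 thinf theta omega) + k1 > 0.

Local Notation G := (sqrt (2 * INR N * E 0 / k2)).

Lemma bond_deviation_le t i j :
  E t <= E 0 -> (i < N)%nat -> (j < N)%nat -> i <> j ->
  Rabs (Rabs (theta j t - theta i t) - thinf i j) <= G.
Proof.
  intros HE Hi Hj Hij. pose proof INR_N_pos. apply Rabs_le_sqrt_of_sq_le.
  eapply Rle_trans; [now apply bond_deviation_sq_le_energy|].
  apply Rmult_le_compat_r; [apply Rlt_le, Rinv_0_lt_compat; lra|].
  apply Rmult_le_compat_l; lra.
Qed.

Lemma scaled_energy0_lt_offdiag_min_sq : 2 * INR N * E 0 / k2 < offdiag_min N thinf ^ 2.
Proof.
  pose proof INR_N_pos.
  apply (Rmult_lt_reg_l (k2 / (2 * INR N))); [apply Rdiv_lt_0_compat; lra|].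
  replace (k2 / (2 * INR N) * (2 * INR N * E 0 / k2)) with (E 0) by (field; lra).
  replace (k2 / (2 * INR N) * offdiag_min N thinf ^ 2)
    with (k2 * offdiag_min N thinf ^ 2 / (2 * INR N)) by (field; lra).
  exact HE0.
Qed.

Lemma offdiag_min_pos : 0 < offdiag_min N thinf.
Proof.
  destruct (offdiag_min_attained N thinf HN) as [i [k [Hi [Hk [Hik Hmin]]]]].
  pose proof (bond_deviation_sq_le_energy i k 0 Hi Hk Hik) as Hdev.
  rewrite <- Hmin in Hdev.
  pose proof scaled_energy0_lt_offdiag_min_sq.
  pose proof (Rabs_pos (theta k 0 - theta i 0)). apply Rnot_le_lt; intros Hle. nra.
Qed.

Lemma sqrt_scaled_energy0_lt_offdiag_min : G < offdiag_min N thinf.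
Proof.
  pose proof offdiag_min_pos as Hm.
  destruct (Rle_lt_dec (2 * INR N * E 0 / k2) 0) as [Hneg|Hpos].
  - now rewrite sqrt_neg_0.
  - rewrite <- (sqrt_pow2 (offdiag_min N thinf)) by lra. apply sqrt_lt_1_alt.
    split; [lra | apply scaled_energy0_lt_offdiag_min_sq].
Qed.

Lemma no_collision t i j :
  E t <= E 0 -> (i < N)%nat -> (j < N)%nat -> i <> j -> theta j t - theta i t <> 0.
Proof.
  intros HE Hi Hj Hij Hcoll.
  pose proof (bond_deviation_le t i j HE Hi Hj Hij) as Hdev.
  pose proof (offdiag_min_le N thinf i j Hi Hj Hij).
  pose proof offdiag_min_pos. pose proof sqrt_scaled_energy0_lt_offdiag_min.
  rewrite Hcoll, Rabs_R0, Rminus_0_l, Rabs_Ropp, Rabs_pos_eq in Hdev by lra. lra.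
Qed.

Lemma phase_gap_le_U t i j :
  E t <= E 0 -> (i < N)%nat -> (j < N)%nat -> i <> j ->
  Rabs (theta j t - theta i t) <= Ubound N k2 thinf theta omega.
Proof.
  intros HE Hi Hj Hij. unfold Ubound.
  pose proof (bond_deviation_le t i j HE Hi Hj Hij) as Hdev.
  pose proof (offdiag_max_ge N thinf i j Hi Hj Hij).
  pose proof (Rle_abs (Rabs (theta j t - theta i t) - thinf i j)). lra.
Qed.

Lemma coupling_pos t i j :
  E t <= E 0 -> (i < N)%nat -> (j < N)%nat -> i <> j ->
  0 < k0 * cos (theta j t - theta i t) + k1.
Proof.
  intros HE Hi Hj Hij.
  assert (Hcos : cos (Ubound N k2 thinf theta omega) <= cos (theta j t - theta i t)).
  { apply cos_ge_of_abs_le; [now apply phase_gap_le_U | lra]. }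
  nra.
Qed.

Definition regular_at y : Prop :=
  forall i, (i < N)%nat -> forall j, (j < N)%nat -> i <> j ->
    0 < Rabs (theta j y - theta i y) /\ 0 < k0 * cos (theta j y - theta i y) + k1.

Lemma regular_near t0 : 0 <= t0 -> E t0 <= E 0 -> locally t0 regular_at.
Proof.
  intros Ht0 HE. apply (locally_forall_lt N (fun i y => forall j, (j < N)%nat -> i <> j ->
    0 < Rabs (theta j y - theta i y) /\ 0 < k0 * cos (theta j y - theta i y) + k1)).
  intros i Hi. apply (locally_forall_lt N (fun j y => i <> j ->
    0 < Rabs (theta j y - theta i y) /\ 0 < k0 * cos (theta j y - theta i y) + k1)).
  intros j Hj. destruct (Nat.eq_dec i j) as [<-|Hij].
  - apply filter_forall. intros y Hne. contradiction.
  - assert (Hgap : continuous (fun y => theta j y - theta i y) t0)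
      by (apply (continuous_minus (theta j) (theta i)); apply theta_continuous; assumption).
    eapply filter_imp; [intros y Hy _; exact Hy|]. apply filter_and.
    + apply (continuous_locally_pos (fun y => Rabs (theta j y - theta i y))).
      * apply (continuous_Rabs_comp (fun y => theta j y - theta i y)), Hgap.
      * apply Rabs_pos_lt. now apply no_collision.
    + apply (continuous_locally_pos (fun y => k0 * cos (theta j y - theta i y) + k1)).
      * apply (continuous_plus (fun y => k0 * cos (theta j y - theta i y)) (fun _ => k1));
          [|apply continuous_const].
        apply (continuous_mult (fun _ => k0) (fun y => cos (theta j y - theta i y)));
          [apply continuous_const | now apply continuous_cos_comp].
      * now apply coupling_pos.
Qed.

Lemma energy_rate_nonpos t : regular_at t -> energy_rate t <= 0.
Proof.
  intros Hreg. rewrite energy_rate_eq.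
  assert (0 <= dsum N (fun i j => (k0 * cos (theta j t - theta i t) + k1)
                                  * (omega j t - omega i t) ^ 2)).
  { apply sumN_nonneg; intros i Hi. apply sumN_nonneg; intros j Hj.
    destruct (Nat.eq_dec i j) as [<-|Hij].
    - rewrite Rminus_diag. simpl. lra.
    - apply Rmult_le_pos; [apply Rlt_le, (Hreg i Hi j Hj Hij) | apply pow2_ge_0]. }
  assert (0 < / (2 * INR N)) by (apply Rinv_0_lt_compat; pose proof INR_N_pos; lra).
  nra.
Qed.

Lemma energy_locally_nonincreasing t0 :
  0 <= t0 -> E t0 <= E 0 ->
  exists d, 0 < d /\ forall s, t0 <= s <= t0 + d -> E s <= E t0.
Proof.
  intros Ht0 HE.
  destruct (locally_Rabs _ _ (regular_near t0 Ht0 HE)) as [d [Hd Hnear]].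
  exists (d / 2). split; [lra|]. intros s Hs.
  apply (nonincreasing_of_derive_nonpos E energy_rate); [lra|].
  intros x Hx.
  assert (Hreg : regular_at x) by (apply Hnear; rewrite Rabs_pos_eq; lra).
  split; [|now apply energy_rate_nonpos].
  apply is_derive_energy; [lra|]. intros i j Hi Hj Hij Hcoll.
  destruct (Hreg i Hi j Hj Hij) as [Hgap _]. rewrite Hcoll, Rabs_R0 in Hgap. lra.
Qed.

Lemma energy_le_initial t : 0 <= t -> E t <= E 0.
Proof.
  apply continuous_induction_le; [exact energy_continuous | apply Rle_refl|].
  intros t0 Ht0 HE. destruct (energy_locally_nonincreasing t0 Ht0 HE) as [d [Hd Hdecr]].
  exists d. split; [exact Hd|]. intros s Hs. eapply Rle_trans; [apply Hdecr|]; assumption.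
Qed.

Lemma velocity_gap_sq_derive_bounded :
  exists M : R, forall i j t, (i < N)%nat -> (j < N)%nat -> 0 <= t ->
    is_derive (fun s => (omega j s - omega i s) ^ 2) t
      (2 * (omega j t - omega i t) * (rhs j t - rhs i t)) /\
    Rabs (2 * (omega j t - omega i t) * (rhs j t - rhs i t)) <= M.
Proof.
  set (B := sqrt (2 * E 0)).
  set (Rb := (k0 + k1) * (2 * B) + k2 * G).
  assert (Hvel : forall i t, (i < N)%nat -> 0 <= t -> Rabs (omega i t) <= B).
  { intros i t Hi Ht. apply Rabs_le_sqrt_of_sq_le.
    pose proof (velocity_sq_le_energy i t Hi). pose proof (energy_le_initial t Ht). lra. }
  assert (Hrhs : forall i t, (i < N)%nat -> 0 <= t -> Rabs (rhs i t) <= Rb).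
  { intros i t Hi Ht. apply kuramoto_rhs_abs_le; [lia | lra | lra | lra | apply sqrt_pos | exact Hi | |].
    - intros j Hj. now apply Hvel.
    - intros j Hj Hji. apply bond_deviation_le; auto using energy_le_initial. }
  exists (2 * (2 * B) * (2 * Rb)). intros i j t Hi Hj Ht. split.
  - apply (is_derive_sq (fun s => omega j s - omega i s)).
    apply (is_derive_minus (omega j) (omega i)); apply Hsol; assumption.
  - assert (Hdiff : forall (f : nat -> R -> R) C, (forall k, (k < N)%nat -> Rabs (f k t) <= C) ->
              Rabs (f j t - f i t) <= 2 * C).
    { intros f C Hf. unfold Rminus. eapply Rle_trans; [apply Rabs_triang|].
      rewrite Rabs_Ropp. pose proof (Hf i Hi). pose proof (Hf j Hj). lra. }
    rewrite !Rabs_mult, Rabs_pos_eq by lra.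
    pose proof (Rabs_pos (omega j t - omega i t)).
    apply Rmult_le_compat; [lra | apply Rabs_pos | |].
    + apply Rmult_le_compat_l; [lra|]. apply (Hdiff omega). intros; now apply Hvel.
    + apply (Hdiff rhs). intros; now apply Hrhs.
Qed.

End BondingKuramoto.

Theorem lemma3p3 (N : nat) (k0 k1 k2 : R) (thinf : nat -> nat -> R)
  (theta omega : nat -> R -> R)
  (HN : (2 <= N)%nat) (Hk0 : 0 <= k0) (Hk1 : 0 <= k1) (Hk2 : 0 < k2)
  (Hsym : forall i j, (i < N)%nat -> (j < N)%nat -> thinf i j = thinf j i)
  (Hdiag : forall i, (i < N)%nat -> thinf i i = 0)
  (* initial data in S *)
  (HS : (forall i j, (i < N)%nat -> (j < N)%nat ->
           Rabs (theta i 0 - theta j 0) < Ubound N k2 thinf theta omega)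
        /\ Ubound N k2 thinf theta omega < PI)
  (HE0 : energy N k2 thinf theta omega 0
         < k2 * (offdiag_min N thinf) ^ 2 / (2 * INR N))
  (Hcoup : k0 * cos (Ubound N k2 thinf theta omega) + k1 > 0)
  (* global solution on [0, +oo) *)
  (Hsol : forall i t, (i < N)%nat -> 0 <= t ->
     is_derive (theta i) t (omega i t) /\
     is_derive (omega i) t (kuramoto_rhs N k0 k1 k2 thinf theta omega i t)) :
  (forall i j, (i < N)%nat -> (j < N)%nat -> i <> j ->
     exists M, forall t, 0 <= t ->
       Rabs (Derive (fun s => (omega j s - omega i s) ^ 2) t) <= M)
  /\
  (forall eps, 0 < eps -> exists delta, 0 < delta /\
     forall s t, 0 <= s -> 0 <= t -> Rabs (s - t) < delta ->
       Rabs (sumN N (fun i => sumN N (fun j => (omega j s - omega i s) ^ 2))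
           - sumN N (fun i => sumN N (fun j => (omega j t - omega i t) ^ 2)))
       < eps).
Proof.
  destruct HS as [_ HUpi].
  destruct (velocity_gap_sq_derive_bounded N k0 k1 k2 thinf theta omega
              HN Hk0 Hk1 Hk2 Hsym Hsol HUpi HE0 Hcoup) as [M HM].
  split.
  - intros i j Hi Hj _. exists M. intros t Ht.
    destruct (HM i j t Hi Hj Ht) as [Hder Hbound].
    rewrite <- (is_derive_unique _ _ _ Hder) in Hbound. exact Hbound.
  - eapply (uniformly_continuous_of_bounded_derive
              (fun s => dsum N (fun i j => (omega j s - omega i s) ^ 2)) _ (INR N * (INR N * M))).
    intros t Ht. split.
    + apply (is_derive_sumN N (fun i s => sumN N (fun j => (omega j s - omega i s) ^ 2))).
      intros i Hi. apply (is_derive_sumN N (fun j s => (omega j s - omega i s) ^ 2)).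
      intros j Hj. now apply HM.
    + apply dsum_Rabs_le. intros i j Hi Hj. now apply HM.
Qed.
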